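(* Let $\underline x\le0$, $\alpha_0\in(0,1)$, $\delta>0$, $\Gamma_1\in\mathbb R$, $\Lambda_1>0$. Let $\xi$ be a real random variable with law $\mu\in\mathcal P_2(\mathbb R)$ satisfying $E|\xi-\underline x|^{-2}<\delta^{-2}$, let $\eta\sim N(0,1)$ be independent of $\xi$, and set $X=\underline x+(\xi-\underline x)e^{\Gamma_1+\sqrt{\Lambda_1}\eta}$ with distribution function $F_X$. Then there is exactly one $z\in\mathbb R$ with $F_X(z)=\alpha_0$.
   Context: $\mathcal P_2(\mathbb R)$ denotes the probability measures on $\mathbb R$ with finite second moment. In the paper $X=X^{t,\xi}_T$ is the terminal wealth under a deterministic proportional strategy, with $\Gamma_1=\Gamma_1(t)$, $\Lambda_1=\Lambda_1(t)$, and the condition on $\mu$ defines the set $\mathcal P^\delta_{\mathrm{MES}}$. *)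

From HB Require Import structures.
From mathcomp Require Import all_boot all_order all_algebra.
From mathcomp Require Import all_classical all_reals all_analysis.
Set Implicit Arguments. Unset Strict Implicit. Unset Printing Implicit Defensive.
Import Order.TTheory GRing.Theory Num.Theory.
Local Open Scope classical_set_scope.
Local Open Scope ring_scope.

Definition indep_RV d (T : measurableType d) (R : realType) (P : probability T R)
  (X Y : {RV P >-> R}) : Prop :=
  forall A B : set R, measurable A -> measurable B ->
    P (X @^-1` A `&` Y @^-1` B) = (P (X @^-1` A) * P (Y @^-1` B))%E.

Definition inv_sq_ext (R : realType) (y : R) : \bar R :=
  if y == 0 then +oo%E else ((`|y| ^+ 2)^-1)%:E.

Definition distr_fun d (T : measurableType d) (R : realType) (P : probability T R)
  (X : T -> R) (z : R) : \bar R := P [set w | X w <= z].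

From HB Require Import structures.
From mathcomp Require Import all_boot all_order all_algebra.
From mathcomp Require Import all_classical all_reals all_analysis.
From mathcomp Require Import lra measurable_realfun.
Import Order.TTheory GRing.Theory Num.Theory.
Local Open Scope classical_set_scope.
Local Open Scope ring_scope.

(* The distribution function F of X is continuous and strictly increasing
   on {0 < F < 1}; since it tends to 0 and 1 at -oo and +oo, the level
   alpha0 is attained, at the supremum of {F < alpha0}, and only there.

   Continuity: X = xlow forces xi = xlow, a null event because
   E |xi - xlow|^-2 is finite.  For c <> xlow the event X = c is
   eta = k(xi) for a measurable k; splitting the line into cells of width h
   and using independence together with the bound h/sqrt(2 pi) on the
   normal mass of a cell gives P(eta = k(xi)) <= h/sqrt(2 pi) for every h.

   Strict monotonicity: on the event where xi - xlow has a fixed sign,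
   ln |X - xlow| = ln |xi - xlow| + Gamma1 + sqrt(Lambda1) eta.  Some cell
   of width h carries positive mass of ln |xi - xlow|, eta charges every
   interval, so by independence X charges every interval between the
   levels 0 and 1 of F. *)

Section grid.
Context {R : realType}.
Implicit Types (lo h v : R) (n : nat).

Definition grid_cell lo h (j : nat) : set R :=
  `[lo + j%:R * h, lo + j%:R * h + h[%classic.

Definition sym_window h n : set R := `[- (n%:R * h), n%:R * h[%classic.

Lemma grid_cell_cover h n v : 0 < h -> sym_window h n v ->
  exists2 j, (j < n + n)%N & grid_cell (- (n%:R * h)) h j v.
Proof.
move=> h0; rewrite /sym_window /= in_itv /= => /andP[lo hi].
have q0 : 0 <= (v + n%:R * h) / h by apply: divr_ge0; lra.
exists (Num.truncn ((v + n%:R * h) / h)).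
  by rewrite truncn_lt_nat// ltr_pdivrMr// natrD mulrDl; lra.
have /andP[a b] := truncn_itv q0.
rewrite ler_pdivlMr// in a; rewrite ltr_pdivrMr// -natr1 mulrDl mul1r in b.
by rewrite /grid_cell /= in_itv /=; apply/andP; split; lra.
Qed.

Lemma trivIset_grid_cell lo h : 0 < h -> trivIset setT (grid_cell lo h).
Proof.
move=> h0; apply/trivIsetP => i j _ _; apply: contraNeq => /set0P[v []].
rewrite /grid_cell /= !in_itv /= => /andP[i1 i2] /andP[j1 j2].
have ij : i%:R * h < j.+1%:R * h by rewrite -natr1 mulrDl mul1r; lra.
have ji : j%:R * h < i.+1%:R * h by rewrite -natr1 mulrDl mul1r; lra.
rewrite ltr_pM2r// ltr_nat ltnS in ij; rewrite ltr_pM2r// ltr_nat ltnS in ji.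
by rewrite eqn_leq ij ji.
Qed.

Lemma nondecreasing_sym_window h : 0 <= h -> nondecreasing_seq (sym_window h).
Proof.
move=> h0 m n mn; apply/subsetPset => v; rewrite /sym_window /= !in_itv /=.
have : m%:R * h <= n%:R * h by rewrite ler_wpM2r// ler_nat.
by move=> mnh /andP[a b]; apply/andP; split; lra.
Qed.

Lemma bigcup_sym_window h : 0 < h -> \bigcup_n sym_window h n = setT.
Proof.
move=> h0; apply/seteqP; split => // v _.
exists (Num.truncn (`|v| / h)).+1 => //.
have := truncnS_gt (`|v| / h); rewrite ltr_pdivrMr//.
rewrite /sym_window /= in_itv /=.
have := ler_norm v; have := ler_norm (- v); rewrite normrN.
by move=> nv nv' vh; apply/andP; split; lra.
Qed.

End grid.

Lemma measurable_preimageT {d d'} {aT : measurableType d} {rT : measurableType d'}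
  {f : aT -> rT} {A : set rT} :
  measurable_fun setT f -> measurable A -> measurable (f @^-1` A).
Proof. by move=> mf mA; rewrite -[_ @^-1` _]setTI; exact: mf. Qed.

Lemma measurable_set_eq d (T : measurableType d) (R : realType) (f g : T -> R) :
  measurable_fun setT f -> measurable_fun setT g ->
  measurable [set w | f w = g w].
Proof.
move=> mf mg; rewrite (_ : [set w | f w = g w] = (f \- g) @^-1` [set 0]).
  exact: measurable_preimageT (measurable_funB mf mg) (measurable_set1 0).
apply/seteqP; split => w /=; first by move=> ->; rewrite subrr.
by move/eqP; rewrite subr_eq0 => /eqP.
Qed.

Lemma trivIset_preimage (I : eqType) (aT rT : Type) (D : set I) (F : I -> set rT)
  (f : aT -> rT) :
  trivIset D F -> trivIset D (fun i => f @^-1` F i).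
Proof.
move=> /trivIsetP tF; apply/trivIsetP => i j Di Dj ij.
by rewrite -preimage_setI tF// preimage_set0.
Qed.

Section measure_windows.
Context {d} {T : measurableType d} {R : realType}.
Variable mu : {measure set T -> \bar R}.
Local Open Scope ereal_scope.

Lemma nondecreasing_measure_bigcup_le (F : (set T)^nat) (a : \bar R) :
  (forall n, measurable (F n)) -> nondecreasing_seq F ->
  (forall n, mu (F n) <= a) -> mu (\bigcup_n F n) <= a.
Proof.
move=> mF ndF Fa; apply: cvge_to_le (nondecreasing_cvg_mu mF _ ndF) _.
  exact: bigcup_measurable.
exact: nearW.
Qed.

Lemma measure_le_sym_windows (E : set T) (U : T -> R) (h : R) (a : \bar R) :
  measurable E -> measurable_fun setT U -> (0 < h)%R ->
  (forall n, mu (E `&` U @^-1` sym_window h n) <= a) -> mu E <= a.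
Proof.
move=> mE mU h0 Ea.
have <- : \bigcup_n (E `&` U @^-1` sym_window h n) = E.
  rewrite -setI_bigcupr -preimage_bigcup bigcup_sym_window//.
  by rewrite preimage_setT setIT.
apply: nondecreasing_measure_bigcup_le => // [n|m n mn].
  apply: measurableI => //; apply: measurable_preimageT => //.
  exact: measurable_itv.
apply/subsetPset; apply: setIS; apply: preimage_subset; apply/subsetPset.
exact: nondecreasing_sym_window (ltW h0) _ _ mn.
Qed.

Lemma exists_itv_measure_gt0 (E : set T) (U : T -> R) (h : R) :
  measurable E -> measurable_fun setT U -> (0 < h)%R -> 0 < mu E ->
  exists c, 0 < mu (E `&` U @^-1` `[c, (c + h)%R[).
Proof.
move=> mE mU h0 E0.
have mEU A : measurable A -> measurable (E `&` U @^-1` A).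
  by move=> mA; apply: measurableI => //; exact: measurable_preimageT.
have [n En] : exists n, 0 < mu (E `&` U @^-1` sym_window h n).
  apply: contrapT => /forallNP En.
  suff : mu E <= 0 by rewrite leNgt E0.
  apply: (measure_le_sym_windows _ _ _ _ mE mU h0) => n.
  by rewrite leNgt; exact/negP/En.
apply: contrapT => /forallNP Ec.
pose C j := E `&` U @^-1` grid_cell (- (n%:R * h)) h j.
have cover : E `&` U @^-1` sym_window h n `<=` \big[setU/set0]_(j < n + n) C j.
  rewrite -bigcup_mkord => w [Ew /(grid_cell_cover _ _ _ h0)[j jn cj]].
  by exists j.
have mC j : measurable (C j) by exact: mEU _ (measurable_itv _).
have := content_subadditive mu (fun j _ => mC j)
  (mEU (sym_window h n) (measurable_itv _)) cover.
rewrite big1 => [|j _]; first by rewrite leNgt En.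
by apply/eqP; rewrite eq_le measure_ge0 andbT leNgt; exact/negP/Ec.
Qed.

End measure_windows.

Section normal_prob_itv.
Context {R : realType}.
Local Open Scope ereal_scope.

Lemma normal_prob_itv_le (a b : R) : (a <= b)%R ->
  normal_prob 0 1 `[a, b[%classic <= (normal_peak 1 * (b - a))%:E.
Proof.
move=> ab; apply: le_trans (_ : \int[lebesgue_measure]_(x in `[a, b[%classic)
  (normal_peak 1)%:E <= _).
  apply: ge0_le_integral => //.
  - by move=> x _; rewrite lee_fin normal_pdf_ge0.
  - apply: (measurable_funS measurableT) => //.
    apply/measurable_EFinP; exact: measurable_normal_pdf.
  - by move=> x _; rewrite lee_fin normal_pdf_ub ?oner_neq0.
rewrite integral_cst//= lebesgue_measure_itv/= lte_fin.
case: ltP => [_|ba]; first by rewrite -EFinD -EFinM.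
by rewrite mule0 lee_fin mulr_ge0 ?normal_peak_ge0 ?subr_ge0.
Qed.

Lemma normal_prob_itv_gt0 (a b : R) : (a < b)%R ->
  0 < normal_prob 0 1 `]a, b[%classic.
Proof.
move=> ab; pose c := (normal_peak 1 * expR (- (a ^+ 2 + b ^+ 2)))%R.
have c0 : (0 < c)%R by rewrite mulr_gt0 ?expR_gt0 ?normal_peak_gt0 ?oner_neq0.
apply: lt_le_trans (_ : \int[lebesgue_measure]_(x in `]a, b[%classic) c%:E <= _).
  by rewrite integral_cst//= lebesgue_measure_itv/= lte_fin ab -EFinD -EFinM
    lte_fin mulr_gt0// subr_gt0.
apply: ge0_le_integral => //.
- by move=> x _; rewrite lee_fin ltW.
- apply: (measurable_funS measurableT) => //.
    apply/measurable_EFinP; exact: measurable_normal_pdf.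
move=> x /=; rewrite in_itv/= => /andP[ax xb].
rewrite lee_fin /normal_pdf oner_eq0 /c ler_pM2l ?normal_peak_gt0 ?oner_neq0//.
rewrite /normal_fun ler_expR subr0 expr1n.
have : (x ^+ 2 <= a ^+ 2 + b ^+ 2)%R by have [x0|x0] := leP 0%R x; nra.
by have := sqr_ge0 x; lra.
Qed.

End normal_prob_itv.

Lemma inv_sq_ext_ge0 (R : realType) (y : R) : (0 <= inv_sq_ext y)%E.
Proof.
by rewrite /inv_sq_ext; case: ifP => // _; rewrite lee_fin invr_ge0 sqr_ge0.
Qed.

Lemma measurable_inv_sq_ext (R : realType) : measurable_fun setT (@inv_sq_ext R).
Proof.
have -> : @inv_sq_ext R =
    fun y => if y == 0 then +oo%E else (`|y| `^ (- 2%:R))%:E.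
  by apply/funext => y; rewrite /inv_sq_ext powR_invn.
apply: measurable_fun_ifT.
- by apply: measurable_fun_eqr; [exact: measurable_id | exact: measurable_cst].
- exact: measurable_cst.
- apply/measurable_EFinP.
  exact: measurableT_comp (measurable_powR _) (@normr_measurable R setT).
Qed.

Lemma inv_sq_ext_integral_null {d} {T : measurableType d} {R : realType}
    (mu : {measure set T -> \bar R}) (Y : T -> R) :
  measurable_fun setT Y -> (\int[mu]_w inv_sq_ext (Y w) < +oo)%E ->
  mu (Y @^-1` [set 0]) = 0%E.
Proof.
move=> mY Yfin; have mY0 := measurable_preimageT mY (measurable_set1 0).
apply/eqP; rewrite eq_le measure_ge0 andbT leNgt; apply/negP => Y0.
have : (\int[mu]_(w in Y @^-1` [set 0%R]) inv_sq_ext (Y w) <=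
        \int[mu]_w inv_sq_ext (Y w))%E.
  apply: ge0_subset_integral => //; last by move=> w _; exact: inv_sq_ext_ge0.
  exact: measurableT_comp (measurable_inv_sq_ext R) mY.
rewrite (eq_integral (cst +oo%E)) => [|w]; last first.
  by rewrite inE /= => ->; rewrite /inv_sq_ext eqxx.
by rewrite integral_cst// gt0_mulye// leye_eq => /eqP Yoo; rewrite Yoo in Yfin.
Qed.

Section cdf_level.
Context d (T : measurableType d) (R : realType) (P : probability T R).
Variable X : {RV P >-> R}.
Local Open Scope ereal_scope.

Lemma exists_cdf_lt (a : R) : (0 < a)%R -> exists z, cdf X z < a%:E.
Proof.
move=> a0; apply: contrapT => /forallNP Xa.
suff : a%:E <= 0 by rewrite lee_fin leNgt a0.
apply: (cvge_to_ge (cvg_cdfNy0 X)); apply: nearW => z.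
by rewrite leNgt; exact/negP/Xa.
Qed.

Lemma exists_cdf_gt (a : R) : (a < 1)%R -> exists z, a%:E < cdf X z.
Proof.
move=> a1; apply: contrapT => /forallNP Xa.
suff : 1 <= a%:E by rewrite lee_fin leNgt a1.
apply: (cvge_to_le (cvg_cdfy1 X)); apply: nearW => z.
by rewrite leNgt; exact/negP/Xa.
Qed.

Lemma cdf_ge_of_right z (a : \bar R) :
  (forall y, (z < y)%R -> a <= cdf X y) -> a <= cdf X z.
Proof.
move=> Xa; apply: (cvge_to_ge (@cdf_right_continuous _ _ _ _ X z)).
by near=> y; apply: Xa; near: y; exact: nbhs_right_gt.
Unshelve. all: by end_near. Qed.

Lemma cdf_le_of_left z (a : \bar R) : P (X @^-1` [set z]) = 0 ->
  (forall y, (y < z)%R -> cdf X y <= a) -> cdf X z <= a.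
Proof.
move=> Xz Xa.
have -> : cdf X z = P (X @^-1` `]-oo, z[).
  rewrite /cdf /distribution /= -(@setUitv1 _ _ _ _ true)// /pushforward.
  rewrite preimage_setU measureU//.
  - by rewrite -[RHS]addr0; congr (_ + _); exact: Xz.
  - exact: measurable_funPTI.
  - rewrite -preimage_setI; apply/seteqP; split => // w [/=].
    by rewrite in_itv/= => /[swap] ->; rewrite ltxx.
have <- : \bigcup_n X @^-1` `]-oo, (z - n.+1%:R^-1)%R] = X @^-1` `]-oo, z[.
  rewrite -preimage_bigcup; congr preimage; apply/seteqP; split => y /=.
    case=> n _ /=; rewrite !in_itv/= => yz; apply: le_lt_trans yz _.
    by rewrite gtrDl oppr_lt0 invr_gt0.
  move=> /=; rewrite in_itv/= -subr_gt0 => yz.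
  exists (Num.truncn (z - y)^-1) => //=; rewrite in_itv/= lerBrDl -lerBrDr ltW//.
  by rewrite -invf_plt ?posrE// truncnS_gt.
apply: nondecreasing_measure_bigcup_le => [n|m n mn|n].
- exact: measurable_funPTI.
- apply/subsetPset; apply: preimage_subset => y.
  rewrite /= !in_itv/= => /le_trans; apply.
  by rewrite lerD2l lerN2 lef_pV2 ?posrE// ler_nat.
- by apply: Xa; rewrite gtrDl oppr_lt0.
Qed.

Lemma cdfD_itv (z1 z2 : R) : (z1 <= z2)%R ->
  cdf X z2 = cdf X z1 + P (X @^-1` `]z1, z2]).
Proof.
move=> z12; rewrite /cdf /distribution /= -measureU//.
  by rewrite -itv_bndbnd_setU// bnd_simp.
apply/seteqP; split => // y [/=]; rewrite !in_itv/= => yz1 /andP[z1y _].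
by have := lt_le_trans z1y yz1; rewrite ltxx.
Qed.

Theorem cdf_eq_exists_unique (alpha : R) : (0 < alpha < 1)%R ->
  (forall c, P (X @^-1` [set c]) = 0) ->
  (forall z1 z2, (z1 < z2)%R -> 0 < cdf X z1 -> 0 < ccdf X z2 ->
    0 < P (X @^-1` `]z1, z2])) ->
  exists! z, cdf X z = alpha%:E.
Proof.
case/andP=> a0 a1 atomless charged.
have level_uniq z1 z2 :
    (z1 < z2)%R -> cdf X z1 = alpha%:E -> cdf X z2 <> alpha%:E.
  move=> z12 F1 F2.
  have charged12 : 0 < P (X @^-1` `]z1, z2]).
    apply: charged z12 _ _; first by rewrite F1 lte_fin.
    by rewrite ccdf_1_cdf F2 -EFinB lte_fin subr_gt0.
  move: F2; rewrite (cdfD_itv _ _ (ltW z12)) F1 => /eqP.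
  by rewrite gt_eqF// lteDl.
pose S := [set z | cdf X z < alpha%:E].
have [a Sa] := exists_cdf_lt _ a0.
have [b Sb] := exists_cdf_gt _ a1.
have supS : has_sup S.
  split; first by exists a.
  exists b => z Sz; rewrite leNgt; apply/negP => bz.
  have := le_lt_trans (cdf_nondecreasing X (ltW bz)) Sz.
  by rewrite ltNge (ltW Sb).
have FsupS : cdf X (sup S) = alpha%:E.
  apply/le_anti/andP; split.
    apply: cdf_le_of_left => // y ys.
    have ys0 : (0 < sup S - y)%R by rewrite subr_gt0.
    have [e Se] := sup_adherent ys0 supS; rewrite opprB addrC subrK => ye.
    exact: le_trans (cdf_nondecreasing X (ltW ye)) (ltW Se).
  apply: cdf_ge_of_right => y sy; rewrite leNgt; apply/negP => Sy.
  by have := sup_upper_bound supS Sy; rewrite leNgt sy.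
exists (sup S); split => // z Fz.
by case: (ltgtP z (sup S)) => // /level_uniq; [move/(_ Fz) | move/(_ FsupS)].
Qed.

End cdf_level.

Section independent_noise.
Context {d} {T : measurableType d} {R : realType} {P : probability T R}.
Context {W V : {RV P >-> R}}.
Hypothesis WV : indep_RV W V.
Local Open Scope ereal_scope.

Section bounded_density.
Variable c : R.
Hypothesis c_gt0 : (0 < c)%R.
Hypothesis V_itv_le :
  forall a b, (a <= b)%R -> P (V @^-1` `[a, b[) <= (c * (b - a))%:E.

Lemma indep_eq_window_le (k : R -> R) (h : R) (n : nat) :
  measurable_fun setT k -> (0 < h)%R ->
  P ([set w | V w = k (W w)] `&` V @^-1` sym_window h n) <= (c * h)%:E.
Proof.
move=> mk h0; set cell := grid_cell (- (n%:R * h)) h.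
have mcell j : measurable (cell j) by exact: measurable_itv.
have mkW j : measurable (W @^-1` (k @^-1` cell j)).
  exact: measurable_funPTI (measurable_preimageT mk (mcell j)).
pose C j := W @^-1` (k @^-1` cell j) `&` V @^-1` cell j.
have mC j : measurable (C j).
  by apply: measurableI => //; exact: measurable_funPTI.
have cover : [set w | V w = k (W w)] `&` V @^-1` sym_window h n `<=`
    \big[setU/set0]_(j < n + n) C j.
  rewrite -bigcup_mkord => w [/= VkW /(grid_cell_cover _ _ _ h0)[j jn cj]].
  by exists j => //; split; rewrite /preimage /= -?VkW.
have mE : measurable ([set w | V w = k (W w)] `&` V @^-1` sym_window h n).
  apply: measurableI; last by apply: measurable_funPTI; exact: measurable_itv.
  exact: measurable_set_eq (measurable_funPT V)
    (measurableT_comp mk (measurable_funPT W)).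
suff Csum : \sum_(j < n + n) P (C j) <= (c * h)%:E.
  exact: le_trans (content_subadditive P (fun j _ => mC j) mE cover) Csum.
apply: le_trans
  (_ : \sum_(j < n + n) P (W @^-1` (k @^-1` cell j)) * (c * h)%:E <= _).
  apply: lee_sum => j _.
  rewrite /C WV//; last exact: measurable_preimageT mk (mcell j).
  apply: lee_wpmul2l => //; apply: le_trans (V_itv_le _ _ _) _.
    by rewrite lerDl ltW.
  by rewrite addrAC subrr add0r.
rewrite -ge0_sume_distrl; last by move=> j _; exact: measure_ge0.
rewrite -(measure_bigsetU P mkW); last first.
  exact/trivIset_preimage/trivIset_preimage/trivIset_grid_cell.
apply: le_trans (_ : 1 * (c * h)%:E <= _); last by rewrite mul1e.
apply: lee_wpmul2r; first by rewrite lee_fin mulr_ge0// ltW.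
by apply: probability_le1; exact: bigsetU_measurable.
Qed.

Lemma indep_eq_null (k : R -> R) : measurable_fun setT k ->
  P [set w | V w = k (W w)] = 0.
Proof.
move=> mk; apply/eqP; rewrite eq_le measure_ge0 andbT.
apply/lee_addgt0Pr => e e0; rewrite add0e.
have h0 : (0 < e / c)%R by rewrite divr_gt0.
apply: (measure_le_sym_windows P _ V (e / c) _ _ (measurable_funPT V) h0) => [|n].
  exact: measurable_set_eq (measurable_funPT V)
    (measurableT_comp mk (measurable_funPT W)).
by rewrite (le_trans (indep_eq_window_le _ _ n mk h0))// mulrC divfK// gt_eqF.
Qed.

End bounded_density.

Section full_support.
Hypothesis V_itv_gt0 : forall a b, (a < b)%R -> 0 < P (V @^-1` `]a, b[).

Lemma indep_add_itv_gt0 (k : R -> R) (D : set R) (a b : R) :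
  measurable_fun setT k -> measurable D -> (a < b)%R -> 0 < P (W @^-1` D) ->
  0 < P (W @^-1` D `&` (fun w => (k (W w) + V w)%R) @^-1` `]a, b[).
Proof.
move=> mk mD ab WD; set h := ((b - a) / 2)%R.
have h0 : (0 < h)%R by rewrite divr_gt0// subr_gt0.
have mkW := measurableT_comp mk (measurable_funPT W).
have [c Wc] :=
  exists_itv_measure_gt0 P _ _ _ (measurable_funPTI W mD) mkW h0 WD.
have Wc' : 0 < P (W @^-1` (D `&` k @^-1` `[c, (c + h)%R[)) := Wc.
have ach : (a - c < a - c + h)%R by rewrite ltrDl.
have := mule_gt0 Wc' (V_itv_gt0 _ _ ach).
rewrite -WV; last 2 first.
- by apply: measurableI => //; exact: measurable_preimageT.
- exact: measurable_itv.
move=> /lt_le_trans; apply; apply: le_measure; rewrite ?inE.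
- apply: measurableI; apply: measurable_funPTI => //.
    by apply: measurableI => //; exact: measurable_preimageT.
- apply: measurableI; first exact: measurable_funPTI.
  apply: measurable_preimageT => //.
  exact: measurable_funD mkW (measurable_funPT V).
move=> w [[/= Dw cw] /= vw]; rewrite in_itv/= in cw; rewrite in_itv/= in vw.
case/andP: cw => cl cr; case/andP: vw => vl vr.
split => //=; rewrite in_itv/=.
by apply/andP; split; rewrite /h in cr vr *; lra.
Qed.

Lemma indep_mul_expR_itv_gt0 (g : R -> R) (G s a b : R) :
  measurable_fun setT g -> (0 < s)%R -> (0 <= a)%R -> (a < b)%R ->
  0 < P (W @^-1` (g @^-1` `]0%R, +oo[)) ->
  0 < P ((fun w => (g (W w) * expR (G + s * V w))%R) @^-1` `]a, b[).
Proof.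
move=> mg s0 a0 ab Wg; set a' := Num.max a (b / 2)%R.
have a'0 : (0 < a')%R by rewrite lt_max; apply/orP; right; lra.
have aa' : (a <= a')%R by rewrite le_max lexx.
have a'b : (a' < b)%R by rewrite gt_max ab/=; lra.
have b0 : (0 < b)%R by lra.
pose k x := ((ln (g x) + G) / s)%R.
have mk : measurable_fun setT k.
  apply: measurable_funM => //; apply: measurable_funD => //.
  exact: measurableT_comp (@measurable_ln R) mg.
have := indep_add_itv_gt0 _ _ (ln a' / s)%R (ln b / s)%R mk
  (measurable_preimageT mg (measurable_itv _)) _ Wg.
rewrite ltr_pM2r ?invr_gt0// ltr_ln ?posrE// => /(_ a'b) /lt_le_trans; apply.
apply: le_measure; rewrite ?inE.
- apply: measurableI; first exact/measurable_funPTI/measurable_preimageT.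
  apply: measurable_preimageT => //; apply: measurable_funD => //.
  exact: measurableT_comp mk (measurable_funPT W).
- apply: measurable_preimageT => //; apply: measurable_funM.
    exact: measurableT_comp mg (measurable_funPT W).
  apply: measurableT_comp => //; apply: measurable_funD => //.
  exact: measurable_funM.
move=> w [/= gW]; rewrite in_itv/= andbT in gW.
rewrite /= in_itv/= => /andP[l r]; rewrite in_itv/=.
rewrite /k -(ltr_pM2r s0) mulrDl !divfK ?gt_eqF// in l.
rewrite /k -(ltr_pM2r s0) mulrDl !divfK ?gt_eqF// in r.
rewrite -ltr_expR lnK ?posrE// in l; rewrite -ltr_expR lnK ?posrE// in r.
have -> : (g (W w) * expR (G + s * V w) = expR (ln (g (W w)) + G + V w * s))%R.
  by rewrite -addrA [RHS]expRD lnK ?posrE// [(V w * s)%R]mulrC.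
by rewrite r (le_lt_trans aa' l).
Qed.

End full_support.

End independent_noise.

Definition terminal_wealth {T : Type} {R : realType} (xi eta : T -> R)
    (xlow G s : R) (w : T) : R :=
  xlow + (xi w - xlow) * expR (G + s * eta w).

Section terminal_wealth.
Context {d} {T : measurableType d} {R : realType} {P : probability T R}.
Variables xi eta : {RV P >-> R}.
Hypothesis xi_eta : indep_RV xi eta.
Hypothesis eta_normal :
  forall A, measurable A -> distribution P eta A = normal_prob 0 1 A.
Variables xlow G s : R.
Hypothesis s_gt0 : 0 < s.
Local Notation X := (terminal_wealth xi eta xlow G s).

Lemma measurable_terminal_wealth : measurable_fun setT X.
Proof.
apply: measurable_funD => //; apply: measurable_funM.
  exact: measurable_funB (measurable_funPT xi) (measurable_cst _).
apply: measurableT_comp => //; apply: measurable_funD => //.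
exact: measurable_funM.
Qed.

Local Open Scope ereal_scope.

Let eta_itv_le a b : (a <= b)%R ->
  P (eta @^-1` `[a, b[) <= (normal_peak 1 * (b - a))%:E.
Proof.
move=> ab; have := eta_normal _ (measurable_itv `[a, b[).
by rewrite /distribution /pushforward => ->; exact: normal_prob_itv_le.
Qed.

Let eta_itv_gt0 a b : (a < b)%R -> 0 < P (eta @^-1` `]a, b[).
Proof.
move=> ab; have := eta_normal _ (measurable_itv `]a, b[).
by rewrite /distribution /pushforward => ->; exact: normal_prob_itv_gt0.
Qed.

Let measurable_sub_xlow : measurable_fun setT (fun x : R => x - xlow)%R.
Proof. exact: measurable_funB. Qed.

Let measurable_xlow_sub : measurable_fun setT (fun x : R => xlow - x)%R.
Proof. exact: measurable_funB. Qed.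

Lemma terminal_wealth_atom (c : R) :
  \int[P]_w inv_sq_ext (xi w - xlow)%R < +oo -> P (X @^-1` [set c]) = 0.
Proof.
move=> xi_fin; apply/eqP; rewrite eq_le measure_ge0 andbT.
have expR_neq0 w : (expR (G + s * eta w) != 0)%R by rewrite gt_eqF ?expR_gt0.
have [->|cx] := eqVneq c xlow.
  have mY := measurableT_comp measurable_sub_xlow (measurable_funPT xi).
  rewrite -(inv_sq_ext_integral_null P _ mY xi_fin).
  apply: le_measure; rewrite ?inE.
  - exact: measurable_preimageT measurable_terminal_wealth (measurable_set1 _).
  - exact: measurable_preimageT mY (measurable_set1 _).
  move=> w /= Xw; have : ((xi w - xlow) * expR (G + s * eta w) = 0)%R.
    by move: Xw; rewrite /terminal_wealth; lra.
  by move/eqP; rewrite mulf_eq0 (negbTE (expR_neq0 w)) orbF => /eqP.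
pose k x := ((ln `|c - xlow| - ln `|x - xlow| - G) / s)%R.
have mk : measurable_fun setT k.
  apply: measurable_funM => //; apply: measurable_funB => //.
  apply: measurable_funB => //; apply: measurableT_comp (@measurable_ln R) _.
  exact: measurableT_comp (@normr_measurable R setT) measurable_sub_xlow.
have peak_gt0 : (0 < normal_peak (1 : R))%R := normal_peak_gt0 (oner_neq0 R).
rewrite -(indep_eq_null xi_eta _ peak_gt0 eta_itv_le _ mk).
apply: le_measure; rewrite ?inE.
- exact: measurable_preimageT measurable_terminal_wealth (measurable_set1 _).
- exact: measurable_set_eq (measurable_funPT eta)
    (measurableT_comp mk (measurable_funPT xi)).
move=> w /= Xw; have e : ((xi w - xlow) * expR (G + s * eta w) = c - xlow)%R.
  by move: Xw; rewrite /terminal_wealth; lra.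
have Y0 : (xi w - xlow != 0)%R.
  by apply: contra_neq cx => Y0; apply/eqP; rewrite -subr_eq0 -e Y0 mul0r.
have lnc : (ln `|c - xlow| = ln `|xi w - xlow| + (G + s * eta w))%R.
  rewrite -e normrM (gtr0_norm (expR_gt0 _)).
  by rewrite lnM ?posrE ?normr_gt0 ?expR_gt0// expRK.
rewrite /k lnc (_ : ln `|xi w - xlow| + (G + s * eta w) - ln `|xi w - xlow| - G
  = s * eta w)%R; last by lra.
by rewrite mulrC mulKf ?gt_eqF.
Qed.

Lemma terminal_wealth_itv_gt0 (z1 z2 : R) : (z1 < z2)%R ->
  0 < P (X @^-1` `]-oo, z1]) -> 0 < P (X @^-1` `]z2, +oo[) ->
  0 < P (X @^-1` `]z1, z2]).
Proof.
move=> z12 X1 X2.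
have mX i := measurable_preimageT measurable_terminal_wealth (measurable_itv i).
have E0 w : (0 < expR (G + s * eta w))%R := expR_gt0 _.
have [xz2|z2x] := ltP xlow z2.
- have xi_gt : 0 < P (xi @^-1` ((fun x => x - xlow)%R @^-1` `]0%R, +oo[)).
    apply: lt_le_trans X2 _; apply: le_measure; rewrite ?inE//.
      exact/measurable_funPTI/measurable_preimageT.
    move=> w /=; rewrite !in_itv/= !andbT => Xw.
    rewrite -(pmulr_lgt0 _ (E0 w)); move: Xw; rewrite /terminal_wealth; lra.
  have := indep_mul_expR_itv_gt0 xi_eta eta_itv_gt0 _ G s
    (Num.max (z1 - xlow) 0)%R (z2 - xlow)%R measurable_sub_xlow s_gt0 _ _ xi_gt.
  rewrite le_max lexx orbT gt_max subr_gt0 xz2 ltrD2r z12 => /(_ isT isT).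
  move=> /lt_le_trans; apply; apply: le_measure; rewrite ?inE//.
    apply: measurable_preimageT (measurable_itv _); apply: measurable_funM.
      exact: measurableT_comp measurable_sub_xlow (measurable_funPT xi).
    apply: measurableT_comp => //; apply: measurable_funD => //.
    exact: measurable_funM.
  move=> w /=; rewrite !in_itv/= gt_max => /andP[/andP[l _] r].
  by apply/andP; split; rewrite /terminal_wealth; lra.
- have z1x : (z1 < xlow)%R by apply: lt_le_trans z2x.
  have xi_lt : 0 < P (xi @^-1` ((fun x => xlow - x)%R @^-1` `]0%R, +oo[)).
    apply: lt_le_trans X1 _; apply: le_measure; rewrite ?inE//.
      exact/measurable_funPTI/measurable_preimageT.
    move=> w /=; rewrite !in_itv/= andbT => Xw.
    rewrite -(pmulr_lgt0 _ (E0 w)); move: Xw; rewrite /terminal_wealth; lra.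
  have := indep_mul_expR_itv_gt0 xi_eta eta_itv_gt0 _ G s (xlow - z2)%R
    (xlow - z1)%R measurable_xlow_sub s_gt0 _ _ xi_lt.
  rewrite subr_ge0 z2x ltrD2l ltrN2 z12 => /(_ isT isT).
  move=> /lt_le_trans; apply; apply: le_measure; rewrite ?inE//.
    apply: measurable_preimageT (measurable_itv _); apply: measurable_funM.
      exact: measurableT_comp measurable_xlow_sub (measurable_funPT xi).
    apply: measurableT_comp => //; apply: measurable_funD => //.
    exact: measurable_funM.
  move=> w /=; rewrite !in_itv/= => /andP[l r].
  by apply/andP; split; rewrite /terminal_wealth; lra.
Qed.

End terminal_wealth.

Theorem lemma10 (d : measure_display) (T : measurableType d) (R : realType)
  (P : probability T R) (xi eta : {RV P >-> R})
  (xlow alpha0 delta Gamma1 Lambda1 : R) :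
  xlow <= 0 -> 0 < alpha0 -> alpha0 < 1 -> 0 < delta -> 0 < Lambda1 ->
  (* law of xi is in P_2(R) *)
  (\int[P]_w ((xi w) ^+ 2)%:E < +oo)%E ->
  (* E |xi - xlow|^{-2} < delta^{-2} *)
  (\int[P]_w inv_sq_ext (xi w - xlow) < ((delta ^+ 2)^-1)%:E)%E ->
  (* eta ~ N(0,1) *)
  (forall A : set R, measurable A -> distribution P eta A = normal_prob 0 1 A) ->
  indep_RV xi eta ->
  exists! z : R,
    distr_fun P (fun w => xlow + (xi w - xlow) *
                   expR (Gamma1 + Num.sqrt Lambda1 * eta w)) z = alpha0%:E.
Proof.
move=> _ a0 a1 _ L0 _ xi_bound eta_normal xi_eta.
have s0 : 0 < Num.sqrt Lambda1 by rewrite sqrtr_gt0.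
have xi_fin := lt_le_trans xi_bound (leey _).
have mX := measurable_terminal_wealth xi eta xlow Gamma1 (Num.sqrt Lambda1).
pose X : {RV P >-> R} := mfun_Sub (mem_set mX : _ \in mfun).
have -> : distr_fun P (terminal_wealth xi eta xlow Gamma1 (Num.sqrt Lambda1))
    = cdf X.
  apply/funext => z; rewrite /distr_fun /cdf /distribution /pushforward.
  by congr (P _); apply/seteqP; split => w; rewrite /= in_itv.
apply: cdf_eq_exists_unique; first by rewrite a0 a1.
  by move=> c; exact: terminal_wealth_atom xi_eta eta_normal _ _ _ s0 c xi_fin.
exact: terminal_wealth_itv_gt0 xi_eta eta_normal _ _ _ s0.
Qed.
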